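(* Let $\Upsilon$ be a tree and let $\|\cdot\|$ be an equivalent strictly convex norm on $C_0(\Upsilon)$. Then the associated function $\mu(t)=\inf\{\|\mathbf{1}_{(0,t]}+f'\|: f'\in C_0(\Upsilon),\ \operatorname{supp}f'\subseteq(t,\infty)\}$ is constant on no ever-branching subset of $\Upsilon$.
   Context: A tree is a partially ordered set $(\Upsilon,\preceq)$ such that for each $t$ the set $(0,t]=\{s:s\preceq t\}$ is well-ordered; write $(0,t)=\{s:s\prec t\}$, $[t,\infty)=\{u:t\preceq u\}$, $(t,\infty)=\{u:t\prec u\}$, and let $r(t)$ be the order type of $(0,t)$. Trees are assumed Hausdorff: if $r(t)$ is a limit ordinal and $(0,t)=(0,t')$ then $t=t'$. $\Upsilon$ carries the coarsest topology in which every $(0,t]$ is open and closed, and $C_0(\Upsilon)$ is the space of continuous $f:\Upsilon\to\mathbb{R}$ with $\{|f|\ge\epsilon\}$ compact for every $\epsilon>0$, with the supremum norm; $\operatorname{supp}f=\{s:f(s)\ne0\}$. A subset $\Gamma\subseteq\Upsilon$ is ever-branching if it is non-empty and for every $t\in\Gamma$ the set $\Gamma\cap[t,\infty)$ is not totally ordered. A norm is strictly convex if $\|x\|=\|y\|=\tfrac12\|x+y\|$ implies $x=y$. *)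

From Stdlib Require Import Reals List Classical ClassicalEpsilon.
From Coquelicot Require Import Coquelicot.
Open Scope R_scope.

Section Trees.
Context {T : Type} (le : T -> T -> Prop).

Definition lt (s t : T) : Prop := le s t /\ s <> t.

Definition initial_well_ordered (t : T) : Prop :=
  (forall a b, le a t -> le b t -> le a b \/ le b a) /\
  (forall P : T -> Prop, (exists a, P a /\ le a t) ->
     exists m, P m /\ le m t /\ forall a, P a -> le a t -> le m a).

(* r(t), the order type of (0,t), is a (nonzero) limit ordinal:
   (0,t) is nonempty and has no greatest element *)
Definition limit_height (t : T) : Prop :=
  (exists s, lt s t) /\ (forall s, lt s t -> exists s', lt s s' /\ lt s' t).

Definition is_tree : Prop :=
  (forall t, le t t) /\
  (forall s t, le s t -> le t s -> s = t) /\
  (forall s t u, le s t -> le t u -> le s u) /\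
  (forall t, initial_well_ordered t) /\
  (* Hausdorff *)
  (forall t t', limit_height t -> (forall s, lt s t <-> lt s t') -> t = t').

(* Finite intersections of the subbasic sets (0,t] and their complements. *)
Definition basic (A B : list T) (x : T) : Prop :=
  (forall t, In t A -> le x t) /\ (forall s, In s B -> ~ le x s).

Definition is_open (U : T -> Prop) : Prop :=
  forall x, U x -> exists A B, basic A B x /\ forall y, basic A B y -> U y.

Definition is_compact (K : T -> Prop) : Prop :=
  forall (I : Type) (U : I -> T -> Prop),
    (forall i, is_open (U i)) ->
    (forall x, K x -> exists i, U i x) ->
    exists l : list I, forall x, K x -> exists i, In i l /\ U i x.

Definition continuous_tree (f : T -> R) : Prop :=
  forall x eps, 0 < eps -> exists A B, basic A B x /\
    forall y, basic A B y -> Rabs (f y - f x) < eps.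

Definition C0 (f : T -> R) : Prop :=
  continuous_tree f /\
  forall eps, 0 < eps -> is_compact (fun x => eps <= Rabs (f x)).

Definition sup_norm (f : T -> R) : R :=
  real (Lub_Rbar (fun r => exists x, r = Rabs (f x))).

Definition equivalent_norm (N : (T -> R) -> R) : Prop :=
  (forall f g, C0 f -> C0 g -> N (fun x => f x + g x) <= N f + N g) /\
  (forall c f, C0 f -> N (fun x => c * f x) = Rabs c * N f) /\
  (forall f, C0 f -> 0 <= N f) /\
  (forall f, C0 f -> N f = 0 -> forall x, f x = 0) /\
  (exists a b, 0 < a /\ 0 < b /\
     forall f, C0 f -> a * sup_norm f <= N f /\ N f <= b * sup_norm f).

Definition strictly_convex (N : (T -> R) -> R) : Prop :=
  forall f g, C0 f -> C0 g ->
    N f = N g -> N g = / 2 * N (fun x => f x + g x) -> forall x, f x = g x.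

Definition indicator_le (t : T) : T -> R :=
  fun x => if excluded_middle_informative (le x t) then 1 else 0.

Definition mu (N : (T -> R) -> R) (t : T) : R :=
  real (Glb_Rbar (fun r => exists f', C0 f' /\
          (forall s, f' s <> 0 -> lt t s) /\
          r = N (fun x => indicator_le t x + f' x))).

Definition ever_branching (G : T -> Prop) : Prop :=
  (exists t, G t) /\
  forall t, G t -> exists u v, G u /\ G v /\ le t u /\ le t v /\
    ~ le u v /\ ~ le v u.

Definition constant_on (g : T -> R) (G : T -> Prop) : Prop :=
  exists c, forall t, G t -> g t = c.

End Trees.

From Pilot Require Import Defs.
From Stdlib Require Import Reals List Classical ClassicalEpsilon FunctionalExtensionality Lra Lia.
From Coquelicot Require Import Coquelicot.
Open Scope R_scope.

(* Suppose [mu = c] on an ever-branching [G] and pick, for every [q] in [G], two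
   incomparable successors [u q], [v q] in [G].  Averaging the indicators of
   [(0,r]] over the [2^n] leaves [r] of the depth-[n] splitting tree above [p]
   gives a uniformly Cauchy sequence; its limit [L p] is admissible for [p], so
   [N (L p) >= c].  Averaging near-optimal admissible functions in the same way
   shows [N (L p) <= c]: their perturbations live above distinct leaves, hence
   on disjoint sets, so the averaged perturbation is of size [2^-n].  For [t] in
   [G], the midpoint of [L (u t)] and [L (v t)] is admissible for [t], so it has
   norm [>= c] while both endpoints have norm [c]; strict convexity forces
   [L (u t) = L (v t)], which fails at the point [u t]. *)

Section Tree.
Context {T : Type} (le : T -> T -> Prop) (Htree : is_tree le).

Local Notation lt := (Defs.lt le).
Local Notation ind := (indicator_le le).
Local Notation basic := (Defs.basic le).
Local Notation is_open := (Defs.is_open le).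
Local Notation is_compact := (Defs.is_compact le).
Local Notation continuous_tree := (Defs.continuous_tree le).
Local Notation C0 := (Defs.C0 le).

Lemma tree_refl t : le t t.
Proof. apply Htree. Qed.

Lemma tree_antisym s t : le s t -> le t s -> s = t.
Proof. apply Htree. Qed.

Lemma tree_trans s t u : le s t -> le t u -> le s u.
Proof. apply Htree. Qed.

Lemma tree_hausdorff t t' : limit_height le t -> (forall s, lt s t <-> lt s t') -> t = t'.
Proof. apply Htree. Qed.

Lemma tree_total_below a b t : le a t -> le b t -> le a b \/ le b a.
Proof. destruct Htree as (_ & _ & _ & Hwo & _). apply (proj1 (Hwo t)). Qed.

Lemma tree_least_below t (P : T -> Prop) :
  (exists a, P a /\ le a t) -> exists m, P m /\ le m t /\ forall a, P a -> le a t -> le m a.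
Proof. destruct Htree as (_ & _ & _ & Hwo & _). apply (proj2 (Hwo t)). Qed.

Lemma lt_irrefl t : ~ lt t t.
Proof. intros [_ h]. exact (h eq_refl). Qed.

Lemma lt_of_le_of_lt p q y : le p q -> lt q y -> lt p y.
Proof.
  intros hpq [hqy hne]. split; [exact (tree_trans _ _ _ hpq hqy)|].
  intros ->. apply hne, tree_antisym; assumption.
Qed.

Lemma lt_of_le_not_ge y m b : le y m -> le y b -> ~ le m b -> lt y m.
Proof. intros hym hyb hmb. split; [exact hym|]. intros ->. exact (hmb hyb). Qed.

(** * Compactness of the initial segments *)

Lemma limit_le_of_bounds m b :
  limit_height le m -> (forall s, lt s m -> le s b) -> le m b.
Proof.
  intros hlim hb.
  assert (hbm : ~ lt b m).
  { intros hbm. destruct (proj2 hlim b hbm) as (s & [hbs hne] & hsm).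
    apply hne, tree_antisym; [exact hbs | exact (hb s hsm)]. }
  destruct (tree_least_below b (fun z => ~ lt z m)) as (b' & hb'm & hb'b & hmin).
  { exists b. split; [exact hbm | apply tree_refl]. }
  enough (m = b') by (subst; exact hb'b).
  apply tree_hausdorff; [exact hlim|]. intros s. split.
  - intros hsm. destruct (tree_total_below s b' b (hb s hsm) hb'b) as [h | h].
    + split; [exact h|]. intros ->. contradiction.
    + exfalso. exact (hb'm (lt_of_le_of_lt _ _ _ h hsm)).
  - intros [hsb' hne]. apply NNPP. intros hsm.
    apply hne, tree_antisym; [exact hsb'|].
    apply hmin; [exact hsm | exact (tree_trans _ _ _ hsb' hb'b)].
Qed.

Definition bounded_below (m : T) (Y : T -> Prop) : Prop :=
  (forall y, le y m -> ~ Y y) \/ exists s, lt s m /\ forall y, le y m -> Y y -> le y s.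

Lemma bounded_below_impl m (Y Z : T -> Prop) :
  (forall y, Z y -> Y y) -> bounded_below m Y -> bounded_below m Z.
Proof.
  intros hZY [hY | (s & hs & hY)].
  - left. intros y hy hz. exact (hY y hy (hZY y hz)).
  - right. exists s. split; [exact hs|]. intros y hy hz. exact (hY y hy (hZY y hz)).
Qed.

Lemma bounded_below_or m (Y Z : T -> Prop) :
  bounded_below m Y -> bounded_below m Z -> bounded_below m (fun y => Y y \/ Z y).
Proof.
  intros [hY | (s & hs & hY)] [hZ | (s' & hs' & hZ)].
  - left. intros y hy [h | h]; [exact (hY y hy h) | exact (hZ y hy h)].
  - right. exists s'. split; [exact hs'|].
    intros y hy [h | h]; [contradiction (hY y hy h) | exact (hZ y hy h)].
  - right. exists s. split; [exact hs|].
    intros y hy [h | h]; [exact (hY y hy h) | contradiction (hZ y hy h)].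
  - destruct (tree_total_below s s' m (proj1 hs) (proj1 hs')) as [h | h].
    + right. exists s'. split; [exact hs'|]. intros y hy [hy' | hy'].
      * exact (tree_trans _ _ _ (hY y hy hy') h).
      * exact (hZ y hy hy').
    + right. exists s. split; [exact hs|]. intros y hy [hy' | hy'].
      * exact (hY y hy hy').
      * exact (tree_trans _ _ _ (hZ y hy hy') h).
Qed.

Lemma bounded_below_le m b : ~ le m b -> bounded_below m (fun y => le y b).
Proof.
  intros hmb.
  destruct (classic (exists s, lt s m /\ ~ le s b)) as [(s & hsm & hsb) | hall].
  { right. exists s. split; [exact hsm|]. intros y hym hyb.
    destruct (tree_total_below y s m hym (proj1 hsm)) as [h | h]; [exact h|].
    exfalso. exact (hsb (tree_trans _ _ _ h hyb)). }
  destruct (classic (limit_height le m)) as [hlim | hnl].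
  { exfalso. apply hmb, limit_le_of_bounds; [exact hlim|].
    intros s hs. apply NNPP. intros hsb. apply hall. exists s. split; assumption. }
  destruct (not_and_or _ _ hnl) as [hmin | hsucc].
  - left. intros y hym hyb. apply hmin. exists y. exact (lt_of_le_not_ge y m b hym hyb hmb).
  - apply not_all_ex_not in hsucc as [s hs]. apply imply_to_and in hs as [hsm hgap].
    right. exists s. split; [exact hsm|]. intros y hym hyb.
    destruct (tree_total_below y s m hym (proj1 hsm)) as [h | h]; [exact h|].
    destruct (classic (y = s)) as [-> | hne]; [apply tree_refl|].
    exfalso. apply hgap. exists y. split; [split; [exact h | congruence]|].
    exact (lt_of_le_not_ge y m b hym hyb hmb).
Qed.

Lemma bounded_below_list m B :
  (forall b, In b B -> ~ le m b) -> bounded_below m (fun y => exists b, In b B /\ le y b).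
Proof.
  induction B as [| b B IH]; intros hB.
  - left. intros y _ (b & [] & _).
  - apply (bounded_below_impl m (fun y => le y b \/ exists b', In b' B /\ le y b')).
    + intros y (b' & [<- | hb'] & hyb'); [left | right; exists b']; auto.
    + apply bounded_below_or.
      * apply bounded_below_le, hB. left. reflexivity.
      * apply IH. intros b' hb'. apply hB. right. exact hb'.
Qed.

(* Transfinite induction along [(0,t]]: the least [m] whose segment [(0,m]] has no
   finite subcover gets one from a basic neighbourhood of [m] and a segment [(0,s]],
   [s < m]. *)
Lemma compact_down t : is_compact (fun x => le x t).
Proof.
  intros I U HU Hcov. apply NNPP. intros Hno.
  set (P := fun s => ~ exists l, forall x, le x s -> exists i, In i l /\ U i x).
  destruct (tree_least_below t P) as (m & Pm & hmt & hmin).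
  { exists t. split; [exact Hno | apply tree_refl]. }
  apply Pm.
  destruct (Hcov m hmt) as [i0 hi0]. destruct (HU i0 m hi0) as (A & B & [hA hB] & hsub).
  assert (hnbhd : forall y, le y m -> ~ (exists b, In b B /\ le y b) -> U i0 y).
  { intros y hy hyB. apply hsub. split.
    - intros a ha. exact (tree_trans _ _ _ hy (hA a ha)).
    - intros b hb hyb. apply hyB. exists b. split; assumption. }
  destruct (bounded_below_list m B hB) as [hempty | (s & [hsm hne] & hs)].
  - exists (i0 :: nil). intros y hy. exists i0. split; [left; reflexivity|].
    apply hnbhd; [exact hy|]. exact (hempty y hy).
  - assert (hPs : ~ P s).
    { intros Ps. apply hne, tree_antisym; [exact hsm|].
      apply hmin; [exact Ps | exact (tree_trans _ _ _ hsm hmt)]. }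
    apply NNPP in hPs. destruct hPs as [l hl]. exists (i0 :: l). intros y hy.
    destruct (classic (le y s)) as [h | h].
    + destruct (hl y h) as (i & hi & hu). exists i. split; [right |]; assumption.
    + exists i0. split; [left; reflexivity|]. apply hnbhd; [exact hy|].
      intros hyB. exact (h (hs y hy hyB)).
Qed.

Lemma basic_app A1 B1 A2 B2 x :
  basic (A1 ++ A2) (B1 ++ B2) x <-> basic A1 B1 x /\ basic A2 B2 x.
Proof.
  unfold Defs.basic. split.
  - intros [hA hB]. repeat split; intros; [apply hA | apply hB | apply hA | apply hB];
      auto using in_or_app.
  - intros [[hA1 hB1] [hA2 hB2]]. split; intros s hs; apply in_app_or in hs; destruct hs; auto.
Qed.

Lemma compact_closed_subset (K1 K : T -> Prop) :
  is_compact K1 -> (forall x, K x -> K1 x) -> is_open (fun x => ~ K x) -> is_compact K.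
Proof.
  intros hK1 hsub hopen I U HU Hcov.
  destruct (hK1 (option I) (fun o => match o with Some i => U i | None => fun x => ~ K x end))
    as [l hl].
  - intros [i |]; [apply HU | exact hopen].
  - intros x _. destruct (classic (K x)) as [h | h].
    + destruct (Hcov x h) as [i hi]. exists (Some i). exact hi.
    + exists None. exact h.
  - exists (flat_map (fun o => match o with Some i => i :: nil | None => nil end) l).
    intros x hx. destruct (hl x (hsub x hx)) as ([i |] & hi & hu); [|contradiction].
    exists i. split; [|exact hu].
    apply in_flat_map. exists (Some i). split; [exact hi | left; reflexivity].
Qed.

Lemma compact_union (K1 K2 : T -> Prop) :
  is_compact K1 -> is_compact K2 -> is_compact (fun x => K1 x \/ K2 x).
Proof.
  intros h1 h2 I U HU Hcov.
  destruct (h1 I U HU) as [l1 hl1]; [intros x hx; apply Hcov; left; exact hx|].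
  destruct (h2 I U HU) as [l2 hl2]; [intros x hx; apply Hcov; right; exact hx|].
  exists (l1 ++ l2). intros x [hx | hx].
  - destruct (hl1 x hx) as (i & hi & hu). exists i. split; [apply in_or_app; left|]; assumption.
  - destruct (hl2 x hx) as (i & hi & hu). exists i. split; [apply in_or_app; right|]; assumption.
Qed.

Lemma open_abs_lt f K : continuous_tree f -> is_open (fun y => ~ K <= Rabs (f y)).
Proof.
  intros hf x hx. apply Rnot_le_lt in hx.
  destruct (hf x (K - Rabs (f x))) as (A & B & hb & h); [lra|].
  exists A, B. split; [exact hb|]. intros y hy. specialize (h y hy).
  pose proof (Rabs_triang_inv (f y) (f x)). lra.
Qed.

Lemma continuous_indicator t : continuous_tree (ind t).
Proof.
  intros x eps heps. unfold indicator_le.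
  destruct (excluded_middle_informative (le x t)) as [hx | hx].
  - exists (t :: nil), nil. split.
    + split; [intros s [<- | []]; exact hx | intros s []].
    + intros y [hy _]. destruct (excluded_middle_informative (le y t)) as [h | h].
      * rewrite Rminus_diag, Rabs_R0. exact heps.
      * exfalso. apply h, hy. left. reflexivity.
  - exists (x :: nil), (t :: nil). split.
    + split; intros s [<- | []]; [apply tree_refl | exact hx].
    + intros y [_ hy]. destruct (excluded_middle_informative (le y t)) as [h | h].
      * exfalso. exact (hy t (or_introl eq_refl) h).
      * rewrite Rminus_diag, Rabs_R0. exact heps.
Qed.

Lemma continuous_lincomb al be f g :
  continuous_tree f -> continuous_tree g -> continuous_tree (fun y => al * f y + be * g y).
Proof.
  intros hf hg x eps heps.
  pose proof (Rabs_pos al). pose proof (Rabs_pos be).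
  set (d := eps / (Rabs al + Rabs be + 1)).
  assert (hd : 0 < d) by (apply Rdiv_lt_0_compat; lra).
  destruct (hf x d hd) as (A1 & B1 & hb1 & h1). destruct (hg x d hd) as (A2 & B2 & hb2 & h2).
  exists (A1 ++ A2), (B1 ++ B2). split; [apply basic_app; split; assumption|].
  intros y hy. apply basic_app in hy as [hy1 hy2].
  specialize (h1 y hy1). specialize (h2 y hy2).
  replace (al * f y + be * g y - (al * f x + be * g x))
    with (al * (f y - f x) + be * (g y - g x)) by ring.
  eapply Rle_lt_trans; [apply Rabs_triang|]. rewrite !Rabs_mult.
  assert (d * (Rabs al + Rabs be + 1) = eps) by (unfold d; field; lra).
  nra.
Qed.

Lemma C0_ext f g : (forall y, f y = g y) -> C0 f -> C0 g.
Proof. intros h hf. replace g with f; [exact hf|]. apply functional_extensionality. exact h. Qed.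

Lemma C0_zero : C0 (fun _ => 0).
Proof.
  split.
  - intros x eps heps. exists nil, nil. split; [split; intros _ []|].
    intros y _. rewrite Rminus_diag, Rabs_R0. exact heps.
  - intros eps heps I U _ _. exists nil. intros x hx. rewrite Rabs_R0 in hx. lra.
Qed.

Lemma C0_indicator t : C0 (ind t).
Proof.
  split; [apply continuous_indicator|]. intros eps heps.
  apply (compact_closed_subset (fun x => le x t)).
  - apply compact_down.
  - intros x hx. unfold indicator_le in hx.
    destruct (excluded_middle_informative (le x t)) as [h | _]; [exact h|].
    rewrite Rabs_R0 in hx. lra.
  - apply open_abs_lt, continuous_indicator.
Qed.

Lemma C0_lincomb al be f g : C0 f -> C0 g -> C0 (fun y => al * f y + be * g y).
Proof.
  intros [cf kf] [cg kg]. split; [apply continuous_lincomb; assumption|].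
  intros eps heps.
  pose proof (Rabs_pos al). pose proof (Rabs_pos be).
  set (d := eps / (2 * (Rabs al + Rabs be + 1))).
  assert (hd : 0 < d) by (apply Rdiv_lt_0_compat; lra).
  apply (compact_closed_subset (fun x => d <= Rabs (f x) \/ d <= Rabs (g x))).
  - apply compact_union; [apply kf | apply kg]; exact hd.
  - intros x hx. apply NNPP. intros hn. apply not_or_and in hn as [h1 h2].
    apply Rnot_le_lt in h1. apply Rnot_le_lt in h2.
    assert (Rabs (al * f x + be * g x) < eps); [|lra].
    eapply Rle_lt_trans; [apply Rabs_triang|]. rewrite !Rabs_mult.
    assert (d * (2 * (Rabs al + Rabs be + 1)) = eps) by (unfold d; field; lra).
    nra.
  - apply open_abs_lt, continuous_lincomb; assumption.
Qed.

Lemma C0_add f g : C0 f -> C0 g -> C0 (fun y => f y + g y).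
Proof.
  intros hf hg. apply (C0_ext _ _ (fun y => ltac:(ring) : 1 * f y + 1 * g y = f y + g y)).
  exact (C0_lincomb 1 1 f g hf hg).
Qed.

Lemma C0_sub f g : C0 f -> C0 g -> C0 (fun y => f y - g y).
Proof.
  intros hf hg. apply (C0_ext _ _ (fun y => ltac:(ring) : 1 * f y + -1 * g y = f y - g y)).
  exact (C0_lincomb 1 (-1) f g hf hg).
Qed.

Lemma C0_half_sum f g : C0 f -> C0 g -> C0 (fun y => / 2 * (f y + g y)).
Proof.
  intros hf hg. apply (C0_ext _ _ (fun y => ltac:(ring) : /2 * f y + /2 * g y = /2 * (f y + g y))).
  exact (C0_lincomb (/2) (/2) f g hf hg).
Qed.

Lemma C0_uniform_limit f :
  (forall d, 0 < d -> exists g, C0 g /\ forall y, Rabs (f y - g y) <= d) -> C0 f.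
Proof.
  intros happ.
  assert (cf : continuous_tree f).
  { intros x eps heps. destruct (happ (eps / 4)) as (g & [cg _] & hg); [lra|].
    destruct (cg x (eps / 4)) as (A & B & hb & h); [lra|].
    exists A, B. split; [exact hb|]. intros y hy. specialize (h y hy).
    pose proof (hg y). pose proof (hg x) as hgx.
    rewrite Rabs_minus_sym in hgx.
    replace (f y - f x) with ((f y - g y) + (g y - g x) + (g x - f x)) by ring.
    pose proof (Rabs_triang ((f y - g y) + (g y - g x)) (g x - f x)).
    pose proof (Rabs_triang (f y - g y) (g y - g x)). lra. }
  split; [exact cf|]. intros eps heps.
  destruct (happ (eps / 2)) as (g & [cg kg] & hg); [lra|].
  apply (compact_closed_subset (fun x => eps / 2 <= Rabs (g x))).
  - apply kg. lra.
  - intros x hx. pose proof (hg x). pose proof (Rabs_triang_inv (f x) (g x)). lra.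
  - apply open_abs_lt. exact cf.
Qed.

Lemma C0_bounded g : C0 g -> exists B, forall y, Rabs (g y) <= B.
Proof.
  intros [cg kg].
  destruct (kg 1 Rlt_0_1 nat (fun n y => ~ INR n <= Rabs (g y))) as [l hl].
  - intros n. apply open_abs_lt. exact cg.
  - intros x _. destruct (INR_unbounded (Rabs (g x))) as [n hn]. exists n. lra.
  - exists (Rmax 1 (INR (list_max l))). intros y.
    destruct (Rle_dec 1 (Rabs (g y))) as [h | h].
    + destruct (hl y h) as (i & hi & hu).
      assert (hi_max : (i <= list_max l)%nat).
      { pose proof (proj1 (list_max_le l (list_max l)) (Nat.le_refl _)) as hall.
        rewrite Forall_forall in hall. exact (hall i hi). }
      apply le_INR in hi_max. pose proof (Rmax_r 1 (INR (list_max l))). lra.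
    + pose proof (Rmax_l 1 (INR (list_max l))). lra.
Qed.

Lemma abs_le_sup_norm g : C0 g -> forall y, Rabs (g y) <= sup_norm g.
Proof.
  intros hg y. destruct (C0_bounded g hg) as [B hB]. unfold sup_norm.
  destruct (Lub_Rbar_correct (fun r => exists x, r = Rabs (g x))) as [hub hleast].
  assert (h1 : Rbar_le (Rabs (g y)) (Lub_Rbar (fun r => exists x, r = Rabs (g x))))
    by (apply hub; exists y; reflexivity).
  assert (h2 : Rbar_le (Lub_Rbar (fun r => exists x, r = Rabs (g x))) B)
    by (apply hleast; intros r [x ->]; apply hB).
  destruct (Lub_Rbar (fun r => exists x, r = Rabs (g x))); simpl in *; tauto.
Qed.

Lemma sup_norm_le (g : T -> R) B : 0 <= B -> (forall y, Rabs (g y) <= B) -> sup_norm g <= B.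
Proof.
  intros hB h. unfold sup_norm.
  destruct (Lub_Rbar_correct (fun r => exists x, r = Rabs (g x))) as [_ hleast].
  assert (h2 : Rbar_le (Lub_Rbar (fun r => exists x, r = Rabs (g x))) B)
    by (apply hleast; intros r [x ->]; apply h).
  destruct (Lub_Rbar (fun r => exists x, r = Rabs (g x))); simpl in *; tauto.
Qed.

Lemma indicator_le_0_or_1 q y : ind q y = 0 \/ ind q y = 1.
Proof. unfold indicator_le. destruct (excluded_middle_informative (le y q)); auto. Qed.

Lemma indicator_le_above q r y : le q r -> ~ lt q y -> ind r y = ind q y.
Proof.
  intros hqr hqy. unfold indicator_le.
  destruct (excluded_middle_informative (le y q)) as [h1 | h1];
  destruct (excluded_middle_informative (le y r)) as [h2 | h2]; try reflexivity.
  - exfalso. exact (h2 (tree_trans _ _ _ h1 hqr)).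
  - exfalso. destruct (tree_total_below y q r h2 hqr) as [h | h]; [exact (h1 h)|].
    apply hqy. split; [exact h|]. intros ->. exact (h1 (tree_refl _)).
Qed.

Lemma indicator_le_self t : ind t t = 1.
Proof.
  unfold indicator_le. destruct (excluded_middle_informative (le t t)) as [_ | h];
    [reflexivity | contradiction (h (tree_refl t))].
Qed.

Lemma indicator_le_of_not_le q y : ~ le y q -> ind q y = 0.
Proof.
  intros h. unfold indicator_le.
  destruct (excluded_middle_informative (le y q)); [contradiction | reflexivity].
Qed.

(* [h = 1_(0,t] + f'] with [f'] in [C_0] supported in [(t,oo)]. *)
Definition admissible (t : T) (h : T -> R) : Prop :=
  C0 h /\ forall y, ~ lt t y -> h y = ind t y.

Lemma admissible_half_sum t p q f g :
  le t p -> le t q -> admissible p f -> admissible q g ->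
  admissible t (fun y => / 2 * (f y + g y)).
Proof.
  intros htp htq [cf hf] [cg hg]. split; [apply C0_half_sum; assumption|].
  intros y hty.
  rewrite hf, hg; [| intros h; exact (hty (lt_of_le_of_lt _ _ _ htq h))
                  | intros h; exact (hty (lt_of_le_of_lt _ _ _ htp h))].
  rewrite (indicator_le_above t p y htp hty), (indicator_le_above t q y htq hty). field.
Qed.

Section Norm.
Context (N : (T -> R) -> R) (HN : equivalent_norm le N).

Lemma norm_half_sum f g :
  C0 f -> C0 g -> N (fun y => / 2 * (f y + g y)) = / 2 * N (fun y => f y + g y).
Proof.
  intros hf hg. destruct HN as (_ & Nhom & _).
  rewrite (Nhom (/ 2) _ (C0_add f g hf hg)). rewrite Rabs_pos_eq by lra. reflexivity.
Qed.

Lemma norm_half_sum_le f g C :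
  C0 f -> C0 g -> N f <= C -> N g <= C -> N (fun y => / 2 * (f y + g y)) <= C.
Proof.
  intros hf hg hNf hNg. rewrite norm_half_sum by assumption.
  pose proof (proj1 HN f g hf hg). lra.
Qed.

Definition mu_values (t : T) (r : R) : Prop :=
  exists f', C0 f' /\ (forall s, f' s <> 0 -> lt t s) /\ r = N (fun x => ind t x + f' x).

Lemma mu_is_glb t : is_glb_Rbar (mu_values t) (mu le N t).
Proof.
  destruct HN as (_ & _ & Nnn & _).
  assert (hzero : mu_values t (N (fun x => ind t x + 0))).
  { exists (fun _ => 0). split; [apply C0_zero|]. split; [|reflexivity].
    intros s h. exfalso. exact (h eq_refl). }
  assert (hlb : is_lb_Rbar (mu_values t) 0).
  { intros r (f' & hf' & _ & ->). apply Nnn, C0_add; [apply C0_indicator | exact hf']. }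
  destruct (Glb_Rbar_correct (mu_values t)) as [hglb hgreatest].
  assert (hfin : is_finite (Glb_Rbar (mu_values t))).
  { pose proof (hgreatest 0 hlb). pose proof (hglb _ hzero).
    destruct (Glb_Rbar (mu_values t)); simpl in *; [reflexivity | contradiction | contradiction]. }
  unfold mu. fold (mu_values t). rewrite hfin. apply Glb_Rbar_correct.
Qed.

Lemma mu_le_norm t h : admissible t h -> mu le N t <= N h.
Proof.
  intros [hC hagree]. destruct (mu_is_glb t) as [hlb _].
  apply (hlb (N h)). exists (fun x => h x - ind t x).
  split; [apply C0_sub; [exact hC | apply C0_indicator]|].
  split.
  - intros s hs. apply NNPP. intros hts. apply hs. rewrite (hagree s hts). ring.
  - f_equal. apply functional_extensionality. intros x. ring.
Qed.

Lemma mu_approx t eps : 0 < eps -> exists h, admissible t h /\ N h < mu le N t + eps.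
Proof.
  intros heps. apply NNPP. intros hno. destruct (mu_is_glb t) as [_ hgreatest].
  assert (hlb : is_lb_Rbar (mu_values t) (mu le N t + eps)).
  { intros r (f' & hf' & hsupp & ->). simpl. apply Rnot_lt_le. intros hlt. apply hno.
    exists (fun x => ind t x + f' x). split; [split|exact hlt].
    - apply C0_add; [apply C0_indicator | exact hf'].
    - intros y hty. destruct (Req_dec (f' y) 0) as [-> | hne]; [ring|].
      exfalso. exact (hty (hsupp y hne)). }
  pose proof (hgreatest _ hlb). simpl in *. lra.
Qed.

(** * Averages over a splitting tree *)

Definition splitting (G : T -> Prop) (u v : T -> T) : Prop :=
  forall q, G q -> G (u q) /\ G (v q) /\ le q (u q) /\ le q (v q) /\
                   ~ le (u q) (v q) /\ ~ le (v q) (u q).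

Lemma ever_branching_splitting G : ever_branching le G -> exists u v, splitting G u v.
Proof.
  intros [_ hbr].
  destruct (choice (fun t (uv : T * T) => G t -> G (fst uv) /\ G (snd uv) /\ le t (fst uv) /\
                       le t (snd uv) /\ ~ le (fst uv) (snd uv) /\ ~ le (snd uv) (fst uv)))
    as [f hf].
  - intros t. destruct (classic (G t)) as [hGt | hGt].
    + destruct (hbr t hGt) as (u & v & h). exists (u, v). intros _. exact h.
    + exists (t, t). intros h. contradiction.
  - exists (fun t => fst (f t)), (fun t => snd (f t)). exact hf.
Qed.

Section Splitting.
Context (G : T -> Prop) (u v : T -> T) (hsplit : splitting G u v).

Fixpoint tree_avg (g : T -> T -> R) (n : nat) (p : T) : T -> R :=
  match n with
  | O => g p
  | S n => fun y => / 2 * (tree_avg g n (u p) y + tree_avg g n (v p) y)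
  end.

Lemma tree_avg_succ g n p y :
  tree_avg g (S n) p y = tree_avg (fun q y => / 2 * (g (u q) y + g (v q) y)) n p y.
Proof.
  revert p. induction n as [| n IH]; intros p; [reflexivity|].
  change (tree_avg g (S (S n)) p y)
    with (/ 2 * (tree_avg g (S n) (u p) y + tree_avg g (S n) (v p) y)).
  rewrite !IH. reflexivity.
Qed.

Lemma tree_avg_sub g1 g2 n p y :
  tree_avg (fun q y => g1 q y - g2 q y) n p y = tree_avg g1 n p y - tree_avg g2 n p y.
Proof. revert p. induction n as [| n IH]; intros p; simpl; [reflexivity|]. rewrite !IH. ring. Qed.

Lemma tree_avg_C0 g : (forall q, G q -> C0 (g q)) -> forall n p, G p -> C0 (tree_avg g n p).
Proof.
  intros hg n. induction n as [| n IH]; intros p hp; [exact (hg p hp)|].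
  destruct (hsplit p hp) as (hu & hv & _). apply C0_half_sum; [apply IH, hu | apply IH, hv].
Qed.

Lemma tree_avg_norm_le g C :
  (forall q, G q -> C0 (g q) /\ N (g q) <= C) -> forall n p, G p -> N (tree_avg g n p) <= C.
Proof.
  intros hg n. induction n as [| n IH]; intros p hp; [exact (proj2 (hg p hp))|].
  destruct (hsplit p hp) as (hu & hv & _).
  apply norm_half_sum_le; [apply tree_avg_C0.. | apply IH | apply IH];
    solve [assumption | intros q hq; exact (proj1 (hg q hq))].
Qed.

Lemma split_cones_disjoint p y : G p -> lt (u p) y -> lt (v p) y -> False.
Proof.
  intros hp [hu _] [hv _]. destruct (hsplit p hp) as (_ & _ & _ & _ & huv & hvu).
  destruct (tree_total_below _ _ _ hu hv); contradiction.
Qed.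

(* At each node at most one of the two halves is nonzero at [y], so averaging
   halves the bound. *)
Lemma tree_avg_cone_bound g B :
  (forall q y, G q -> Rabs (g q y) <= B) -> (forall q y, G q -> g q y <> 0 -> lt q y) ->
  forall n p y, G p -> Rabs (tree_avg g n p y) <= B * (/ 2) ^ n /\
                       (tree_avg g n p y <> 0 -> lt p y).
Proof.
  intros hbound hsupp n. induction n as [| n IH]; intros p y hp.
  - simpl. rewrite Rmult_1_r. split; [apply hbound | apply hsupp]; exact hp.
  - destruct (hsplit p hp) as (hu & hv & hpu & hpv & _).
    destruct (IH (u p) y hu) as [ha hsa]. destruct (IH (v p) y hv) as [hb hsb].
    cbn [tree_avg pow].
    set (a := tree_avg g n (u p) y) in *. set (b := tree_avg g n (v p) y) in *.
    assert (hab : a = 0 \/ b = 0).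
    { destruct (Req_dec a 0) as [ha0 | ha0]; [left; exact ha0|]. right.
      apply NNPP. intros hb0. exact (split_cones_disjoint p y hp (hsa ha0) (hsb hb0)). }
    rewrite Rabs_mult, (Rabs_pos_eq (/ 2)) by lra.
    destruct hab as [-> | ->]; rewrite ?Rplus_0_l, ?Rplus_0_r; split.
    + nra.
    + intros hne. apply (lt_of_le_of_lt _ _ _ hpv), hsb. intros ->. apply hne. ring.
    + nra.
    + intros hne. apply (lt_of_le_of_lt _ _ _ hpu), hsa. intros ->. apply hne. ring.
Qed.

Lemma indicator_avg_step n p y : G p ->
  Rabs (tree_avg ind (S n) p y - tree_avg ind n p y) <= (/ 2) ^ n /\
  (tree_avg ind (S n) p y - tree_avg ind n p y <> 0 -> lt p y).
Proof.
  intros hp. rewrite tree_avg_succ, <- tree_avg_sub, <- (Rmult_1_l ((/ 2) ^ n)).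
  apply tree_avg_cone_bound; [| | exact hp].
  - intros q z _. apply Rabs_le.
    destruct (indicator_le_0_or_1 (u q) z) as [-> | ->];
    destruct (indicator_le_0_or_1 (v q) z) as [-> | ->];
    destruct (indicator_le_0_or_1 q z) as [-> | ->]; lra.
  - intros q z hq hne. apply NNPP. intros hqz. apply hne.
    destruct (hsplit q hq) as (_ & _ & hqu & hqv & _).
    rewrite (indicator_le_above q (u q) z hqu hqz), (indicator_le_above q (v q) z hqv hqz).
    field.
Qed.

Lemma indicator_avg_cauchy p y n k : G p ->
  Rabs (tree_avg ind (n + k) p y - tree_avg ind n p y) <= 2 * (/ 2) ^ n - 2 * (/ 2) ^ (n + k).
Proof.
  intros hp. induction k as [| k IH].
  - rewrite Nat.add_0_r, Rminus_diag, Rabs_R0. lra.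
  - rewrite Nat.add_succ_r.
    destruct (indicator_avg_step (n + k) p y hp) as [hstep _].
    replace (tree_avg ind (S (n + k)) p y - tree_avg ind n p y)
      with ((tree_avg ind (S (n + k)) p y - tree_avg ind (n + k) p y) +
            (tree_avg ind (n + k) p y - tree_avg ind n p y)) by ring.
    eapply Rle_trans; [apply Rabs_triang|]. simpl pow. lra.
Qed.

Lemma indicator_avg_close p y n m : G p -> (n <= m)%nat ->
  Rabs (tree_avg ind m p y - tree_avg ind n p y) <= 2 * (/ 2) ^ n.
Proof.
  intros hp hnm. replace m with (n + (m - n))%nat by lia.
  pose proof (indicator_avg_cauchy p y n (m - n) hp).
  pose proof (pow_lt (/ 2) (n + (m - n)) ltac:(lra)). lra.
Qed.

Lemma indicator_avg_outside p y : G p -> ~ lt p y -> forall n, tree_avg ind n p y = ind p y.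
Proof.
  intros hp hpy n. induction n as [| n IH]; [reflexivity|].
  destruct (indicator_avg_step n p y hp) as [_ hsupp].
  destruct (Req_dec (tree_avg ind (S n) p y - tree_avg ind n p y) 0) as [h | h]; [lra|].
  contradiction (hpy (hsupp h)).
Qed.

Definition limit_indicator (p y : T) : R := Lim_seq (fun n => tree_avg ind n p y).

Lemma limit_indicator_approx p y n : G p ->
  Rabs (limit_indicator p y - tree_avg ind n p y) <= 2 * (/ 2) ^ n.
Proof.
  intros hp.
  assert (hlim : is_lim_seq (fun n => tree_avg ind n p y) (limit_indicator p y)).
  { apply Lim_seq_correct', ex_lim_seq_cauchy_corr. intros eps.
    destruct (pow_lt_1_zero (/ 2) ltac:(rewrite Rabs_pos_eq; lra) (eps / 4)) as [k hk].
    { destruct eps. simpl. lra. }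
    exists k. intros n1 n2 hn1 hn2.
    pose proof (indicator_avg_close p y k n1 hp hn1).
    pose proof (indicator_avg_close p y k n2 hp hn2).
    specialize (hk k (Nat.le_refl k)). rewrite Rabs_pos_eq in hk by (apply pow_le; lra).
    replace (tree_avg ind n1 p y - tree_avg ind n2 p y)
      with ((tree_avg ind n1 p y - tree_avg ind k p y) -
            (tree_avg ind n2 p y - tree_avg ind k p y)) by ring.
    eapply Rle_lt_trans; [apply Rabs_triang|]. rewrite Rabs_Ropp. lra. }
  pose proof (is_lim_seq_abs _ _ (is_lim_seq_minus' _ _ _ _ hlim
                (is_lim_seq_const (tree_avg ind n p y)))) as habs.
  refine (is_lim_seq_le_loc _ _ _ _ _ habs (is_lim_seq_const (2 * (/ 2) ^ n))).
  exists n. intros m hm. exact (indicator_avg_close p y n m hp hm).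
Qed.

Lemma nonpos_of_le_half_pow r K : (forall n, r <= K * (/ 2) ^ n) -> r <= 0.
Proof.
  intros h. apply Rnot_lt_le. intros hr.
  destruct (Rle_dec K 0) as [hK | hK].
  - specialize (h O). simpl in h. lra.
  - destruct (pow_lt_1_zero (/ 2) ltac:(rewrite Rabs_pos_eq; lra) (r / K)) as [n hn].
    { apply Rdiv_lt_0_compat; lra. }
    specialize (hn n (Nat.le_refl n)). rewrite Rabs_pos_eq in hn by (apply pow_le; lra).
    specialize (h n). apply (Rmult_lt_compat_l K) in hn; [|lra].
    replace (K * (r / K)) with r in hn by (field; lra). lra.
Qed.

Lemma limit_indicator_admissible p : G p -> admissible p (limit_indicator p).
Proof.
  intros hp. split.
  - apply C0_uniform_limit. intros d hd.
    destruct (pow_lt_1_zero (/ 2) ltac:(rewrite Rabs_pos_eq; lra) (d / 2)) as [n hn]; [lra|].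
    specialize (hn n (Nat.le_refl n)). rewrite Rabs_pos_eq in hn by (apply pow_le; lra).
    exists (tree_avg ind n p). split.
    + apply tree_avg_C0; [intros q _; apply C0_indicator | exact hp].
    + intros y. pose proof (limit_indicator_approx p y n hp). lra.
  - intros y hpy. set (r := limit_indicator p y - ind p y).
    assert (hr : Rabs r <= 0).
    { apply (nonpos_of_le_half_pow _ 2). intros n. unfold r.
      rewrite <- (indicator_avg_outside p y hp hpy n). apply limit_indicator_approx, hp. }
    pose proof (Rle_abs r). pose proof (Rle_abs (- r)). rewrite Rabs_Ropp in *. unfold r in *. lra.
Qed.

Lemma limit_indicator_near_avg x M p y n : G p ->
  (forall q, G q -> admissible q (x q)) -> (forall q y, G q -> Rabs (x q y - ind q y) <= M) ->
  Rabs (limit_indicator p y - tree_avg x n p y) <= (2 + M) * (/ 2) ^ n.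
Proof.
  intros hp hadm hM.
  assert (hdev : Rabs (tree_avg (fun q y => x q y - ind q y) n p y) <= M * (/ 2) ^ n).
  { refine (proj1 (tree_avg_cone_bound _ M hM _ n p y hp)).
    intros q z hq hne. apply NNPP. intros hqz. apply hne.
    rewrite (proj2 (hadm q hq) z hqz). ring. }
  rewrite tree_avg_sub in hdev. pose proof (limit_indicator_approx p y n hp).
  replace (limit_indicator p y - tree_avg x n p y)
    with ((limit_indicator p y - tree_avg ind n p y) -
          (tree_avg x n p y - tree_avg ind n p y)) by ring.
  eapply Rle_trans; [apply Rabs_triang|]. rewrite Rabs_Ropp. lra.
Qed.

Lemma limit_indicator_norm_le_of x C M p : G p ->
  (forall q, G q -> admissible q (x q) /\ N (x q) <= C) ->
  (forall q y, G q -> Rabs (x q y - ind q y) <= M) ->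
  N (limit_indicator p) <= C.
Proof.
  intros hp hx hM. destruct HN as (Ntri & _ & _ & _ & (a & b & ha & hb & hequiv)).
  assert (hM0 : 0 <= M) by exact (Rle_trans _ _ _ (Rabs_pos _) (hM p p hp)).
  enough (hn : forall n, N (limit_indicator p) - C <= b * (2 + M) * (/ 2) ^ n)
    by (pose proof (nonpos_of_le_half_pow _ _ hn); lra).
  intros n.
  set (X := tree_avg x n p). set (D := fun y => limit_indicator p y - X y).
  assert (cX : C0 X).
  { apply tree_avg_C0; [intros q hq; exact (proj1 (proj1 (hx q hq))) | exact hp]. }
  assert (cD : C0 D).
  { apply C0_sub; [exact (proj1 (limit_indicator_admissible p hp)) | exact cX]. }
  assert (nX : N X <= C).
  { apply tree_avg_norm_le; [| exact hp]. intros q hq.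
    destruct (hx q hq) as [[cq _] nq]. split; assumption. }
  assert (nD : N D <= b * ((2 + M) * (/ 2) ^ n)).
  { eapply Rle_trans; [exact (proj2 (hequiv D cD))|]. apply Rmult_le_compat_l; [lra|].
    apply sup_norm_le.
    - pose proof (pow_lt (/ 2) n ltac:(lra)). nra.
    - intros y. apply limit_indicator_near_avg; [exact hp | | exact hM].
      intros q hq. exact (proj1 (hx q hq)). }
  assert (hsum : limit_indicator p = fun y => X y + D y).
  { apply functional_extensionality. intros y. unfold D. ring. }
  rewrite hsum. pose proof (Ntri X D cX cD). lra.
Qed.

Lemma limit_indicator_norm_le c p :
  (forall q, G q -> mu le N q = c) -> G p -> N (limit_indicator p) <= c.
Proof.
  intros hc hp. pose proof HN as (_ & _ & _ & _ & (a & b & ha & hb & hequiv)).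
  apply Rle_plus_epsilon. intros eps heps.
  destruct (choice (fun q h => G q -> admissible q h /\ N h < c + eps)) as [x hx].
  { intros q. destruct (classic (G q)) as [hq | hq].
    - destruct (mu_approx q eps heps) as (h & hadm & hN). exists h. intros _.
      rewrite <- (hc q hq). split; assumption.
    - exists (ind q). intros h. contradiction. }
  apply (limit_indicator_norm_le_of x (c + eps) ((c + eps) / a + 1) p hp).
  - intros q hq. destruct (hx q hq) as [hadm hN]. split; [exact hadm | lra].
  - intros q y hq. destruct (hx q hq) as [[cx _] hN].
    pose proof (abs_le_sup_norm (x q) cx y). pose proof (proj1 (hequiv _ cx)).
    assert (sup_norm (x q) <= (c + eps) / a).
    { apply (Rmult_le_reg_l a); [exact ha|].
      replace (a * ((c + eps) / a)) with (c + eps) by (field; lra). lra. }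
    assert (Rabs (ind q y) <= 1)
      by (destruct (indicator_le_0_or_1 q y) as [-> | ->]; rewrite ?Rabs_R0, ?Rabs_R1; lra).
    pose proof (Rabs_triang (x q y) (- ind q y)). rewrite Rabs_Ropp in *. unfold Rminus. lra.
Qed.

Lemma limit_indicator_norm c p :
  (forall q, G q -> mu le N q = c) -> G p -> N (limit_indicator p) = c.
Proof.
  intros hc hp. apply Rle_antisym; [exact (limit_indicator_norm_le c p hc hp)|].
  rewrite <- (hc p hp). exact (mu_le_norm p _ (limit_indicator_admissible p hp)).
Qed.

End Splitting.
End Norm.
End Tree.

Theorem proposition3p4 (T : Type) (le : T -> T -> Prop) (Htree : is_tree le)
  (N : (T -> R) -> R) (HN : equivalent_norm le N) (Hsc : strictly_convex le N) :
  forall G : T -> Prop, ever_branching le G -> ~ constant_on (mu le N) G.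
Proof.
  intros G hG [c hc].
  destruct (ever_branching_splitting le G hG) as (u & v & hsplit).
  destruct (proj1 hG) as [t ht].
  destruct (hsplit t ht) as (hu & hv & htu & htv & huv & hvu).
  pose proof (limit_indicator_admissible le Htree G u v hsplit) as hadm.
  pose proof (limit_indicator_norm le Htree N HN G u v hsplit c) as hnorm.
  set (Lu := limit_indicator le u v (u t)). set (Lv := limit_indicator le u v (v t)).
  assert (aLu : admissible le (u t) Lu) by exact (hadm _ hu).
  assert (aLv : admissible le (v t) Lv) by exact (hadm _ hv).
  assert (nLu : N Lu = c) by exact (hnorm _ hc hu).
  assert (nLv : N Lv = c) by exact (hnorm _ hc hv).
  assert (nmid : c <= / 2 * N (fun y => Lu y + Lv y)).
  { rewrite <- (hc t ht), <- (norm_half_sum le N HN _ _ (proj1 aLu) (proj1 aLv)).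
    apply (mu_le_norm le Htree N HN).
    exact (admissible_half_sum le Htree t _ _ _ _ htu htv aLu aLv). }
  pose proof (proj1 HN Lu Lv (proj1 aLu) (proj1 aLv)) as htri.
  assert (heq := Hsc Lu Lv (proj1 aLu) (proj1 aLv) ltac:(lra) ltac:(lra) (u t)).
  rewrite (proj2 aLu (u t) (lt_irrefl le (u t))), (proj2 aLv (u t) (fun h => hvu (proj1 h))),
    (indicator_le_self le Htree), (indicator_le_of_not_le le _ _ huv) in heq.
  lra.
Qed.
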